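(* Let $f(x_1,x_2)=(-2+x_1+x_2)^2$ and $g(x_1,x_2)=1-x_1^2-x_2^2$; the global minimum of $f$ on $\{x\in\mathbb{R}^2: g(x)\geqslant 0\}$ is $2(3-2\sqrt{2})$. For every integer $d\geqslant 1$, the order-$d$ SDSOS (dual) relaxation $$\sup_{\lambda,\sigma_0,\sigma_1} \lambda \quad\text{s.t.}\quad f-\lambda=\sigma_0+\sigma_1 g,\ \lambda\in\mathbb{R},\ \sigma_0\in \mathrm{SDSOS}_d,\ \sigma_1\in\mathrm{SDSOS}_{d-1},$$ and the corresponding relaxed moment (primal) problem $$\inf_y L_y(f)\quad\text{s.t.}\quad y_0=1,\ \text{every principal submatrix of size at most }2\text{ of } M_d(y) \text{ and of } M_{d-1}(gy)\text{ is positive semidefinite},$$ both have optimal value $4(1-\sqrt{2})$, which is strictly smaller than the global minimum $2(3-2\sqrt{2})$ (the gap equals $2$).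
   Context: For $\alpha\in\mathbb{N}^2$ write $x^\alpha=x_1^{\alpha_1}x_2^{\alpha_2}$ and $|\alpha|=\alpha_1+\alpha_2$. $\mathrm{SDSOS}_d$ denotes the set of polynomials of the form $\sum_k (p_k x^{\alpha(k)}+q_k x^{\beta(k)})^2$ (finite sum) with $p_k,q_k\in\mathbb{R}$ and $\alpha(k),\beta(k)\in\mathbb{N}^2$, $|\alpha(k)|,|\beta(k)|\leqslant d$ (scaled diagonally-dominant sums of squares). For $y=(y_\alpha)_{|\alpha|\leqslant 2d}$ and $p=\sum_\alpha p_\alpha x^\alpha$, $L_y(p)=\sum_\alpha p_\alpha y_\alpha$; $M_d(y)=(y_{\alpha+\beta})_{|\alpha|,|\beta|\leqslant d}$; $M_{d-1}(gy)=(y_{\alpha+\beta}-y_{\alpha+\beta+(2,0)}-y_{\alpha+\beta+(0,2)})_{|\alpha|,|\beta|\leqslant d-1}$. *)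

From mathcomp Require Import all_boot all_order all_algebra.
From mathcomp Require Import reals.
From mathcomp Require Import mpoly.
Import Order.TTheory GRing.Theory Num.Theory.
Set Implicit Arguments. Unset Strict Implicit. Unset Printing Implicit Defensive.
Local Open Scope ring_scope.

Section Defs.
Variable R : realType.

Definition mono (a b : nat) : 'X_{1..2} :=
  [multinom (if i == ord0 then a else b) | i < 2].

Definition fpoly : {mpoly R[2]} := (- 2%:MP + 'X_ord0 + 'X_(@Ordinal 2 1 isT)) ^+ 2.
Definition gpoly : {mpoly R[2]} := 1 - 'X_ord0 ^+ 2 - 'X_(@Ordinal 2 1 isT) ^+ 2.

Definition SDSOS (d : nat) (s : {mpoly R[2]}) : Prop :=
  exists (n : nat) (p q : 'I_n -> R) (a b : 'I_n -> 'X_{1..2}),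
    (forall k, (mdeg (a k) <= d)%N /\ (mdeg (b k) <= d)%N) /\
    s = \sum_(k < n) (p k *: 'X_[a k] + q k *: 'X_[b k]) ^+ 2.

Definition Ly (y : 'X_{1..2} -> R) (p : {mpoly R[2]}) : R :=
  \sum_(m <- msupp p) p@_m * y m.

Definition psd (n : nat) (A : 'M[R]_n) : Prop :=
  forall v : 'cV[R]_n, 0 <= (v^T *m A *m v) 0 0.

Definition momsub (y : 'X_{1..2} -> R) (k : nat) (s : 'I_k -> 'X_{1..2}) : 'M[R]_k :=
  \matrix_(i, j) y (s i + s j)%MM.

(* localizing matrix M_{d-1}(g y) restricted to rows/columns s i *)
Definition locsub (y : 'X_{1..2} -> R) (k : nat) (s : 'I_k -> 'X_{1..2}) : 'M[R]_k :=
  \matrix_(i, j) (y (s i + s j)%MM - y (s i + s j + mono 2 0)%MM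
                   - y (s i + s j + mono 0 2)%MM).

(* feasibility for the relaxed moment (primal) problem of order d.
   y is given on all monomials; only entries with |alpha| <= 2d are ever used. *)
Definition moment_feasible (d : nat) (y : 'X_{1..2} -> R) : Prop :=
  y 0%MM = 1 /\
  (forall (k : nat) (s : 'I_k -> 'X_{1..2}), (k <= 2)%N -> injective s ->
     (forall i, (mdeg (s i) <= d)%N) -> psd (momsub y s)) /\
  (forall (k : nat) (s : 'I_k -> 'X_{1..2}), (k <= 2)%N -> injective s ->
     (forall i, (mdeg (s i) <= d.-1)%N) -> psd (locsub y s)).

Definition sdsos_feasible (d : nat) (lam : R) : Prop :=
  exists s0 s1 : {mpoly R[2]},
    SDSOS d s0 /\ SDSOS d.-1 s1 /\ fpoly - lam%:MP = s0 + s1 * gpoly.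

Definition is_sup (S : R -> Prop) (v : R) : Prop :=
  (forall x, S x -> x <= v) /\ (forall e, 0 < e -> exists x, S x /\ v - e < x).
Definition is_inf (S : R -> Prop) (v : R) : Prop :=
  (forall x, S x -> v <= x) /\ (forall e, 0 < e -> exists x, S x /\ x < v + e).

End Defs.

From HB Require Import structures.
From mathcomp Require Import all_boot all_order all_algebra.
From mathcomp Require Import reals mpoly ssrcomplements.
From mathcomp Require Import ring lra zify.
Import Order.TTheory GRing.Theory Num.Theory.
Set Implicit Arguments. Unset Strict Implicit. Unset Printing Implicit Defensive.
Local Open Scope ring_scope.

(* An SDSOS multiplier only ever meets 2x2 principal submatrices: for
   sigma = sum (p x^a + q x^b)^2 the value L_y(sigma) is a sum of quadratic
   forms in such submatrices of M_d(y), and L_y(sigma g) likewise of M_(d-1)(g y).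
   This gives weak duality, and both sides attain 4(1 - sqrt 2): the dual one
   through the certificate, with r = 2^(1/4),
     f - 4(1 - sqrt 2) = (r - r^3 x1)^2 + (r - r^3 x2)^2 + (x1 + x2)^2 + r^6 g,
   the primal one through the pseudo-moment sequence [ystar] below.  The true
   minimum (2 - sqrt 2)^2 follows from x1 + x2 <= sqrt 2 on the unit disk. *)

Local Notation i1 := (@Ordinal 2 1 isT).

Lemma monoE a b : mono a b = (U_(ord0) *+ a + U_(i1) *+ b)%MM.
Proof. by apply/mnmP => -[[|[|//]] ?]; rewrite !mnmE !mulmnE !mnm1E /=; lia. Qed.

Lemma monoD a b c d : (mono a b + mono c d)%MM = mono (a + c) (b + d).
Proof. by apply/mnmP => -[[|[|//]] ?]; rewrite !mnmE. Qed.

Lemma mdeg_mono a b : mdeg (mono a b) = (a + b)%N.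
Proof. by rewrite mdegE !big_ord_recr big_ord0 /= !mnmE. Qed.

Lemma binomial_sqrE (R : comNzRingType) n (p q : R) (a b : 'X_{1..n}) :
  (p *: 'X_[a] + q *: 'X_[b]) ^+ 2 =
    p ^+ 2 *: 'X_[a + a] + (2 * p * q) *: 'X_[a + b] + q ^+ 2 *: 'X_[b + b]
  :> {mpoly R[n]}.
Proof. by rewrite !mpolyXD -!mul_mpolyC; ring. Qed.

Section QuadraticForms.
Variable R : comNzRingType.

Lemma quadform_mx1 (A : 'M[R]_1) (v : 'cV[R]_1) :
  (v^T *m A *m v) 0 0 = v 0 0 ^+ 2 * A 0 0.
Proof. by rewrite !mxE !big_ord1 !mxE big_ord1 !mxE expr2 mulrAC. Qed.

Lemma quadform_mx2 (A : 'M[R]_2) (v : 'cV[R]_2) :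
  (v^T *m A *m v) 0 0 =
    v 0 0 ^+ 2 * A 0 0 + v 0 0 * v 1 0 * (A 0 1 + A 1 0) + v 1 0 ^+ 2 * A 1 1.
Proof.
rewrite !mxE !big_ord_recr !big_ord0 /= !mxE !big_ord_recr !big_ord0 /= !mxE.
have -> : widen_ord (leqnSn 1) ord_max = 0 :> 'I_2 by apply/val_inj.
have -> : (ord_max : 'I_2) = 1 by apply/val_inj.
ring.
Qed.

End QuadraticForms.

Section Riesz.
Variable R : realType.
Implicit Types (y : 'X_{1..2} -> R) (p q : {mpoly R[2]}).

Lemma LywE y p k : (msize p <= k)%N ->
  Ly y p = \sum_(m : 'X_{1..2 < k}) p@_m * y m.
Proof.
move=> le_pk; pose I : subFinType _ := 'X_{1..2 < k}.
rewrite /Ly (big_mksub I) ?msupp_uniq //=; last first.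
  by move=> m /msize_mdeg_lt /leq_trans; apply.
by rewrite big_rmcond //= => m /memN_msupp_eq0 ->; rewrite mul0r.
Qed.

Lemma Ly_is_linear y : linear_for *%R (Ly y).
Proof.
move=> c p q; pose k := (msize p + msize q + msize (c *: p + q))%N.
rewrite !(@LywE _ _ k) /k; try lia.
rewrite mulr_sumr -big_split; apply: eq_bigr => m _ /=.
by rewrite mcoeffD mcoeffZ mulrDl mulrA.
Qed.

HB.instance Definition _ y :=
  GRing.isLinear.Build R {mpoly R[2]} R *%R (Ly y) (Ly_is_linear y).

Lemma LyX y m : Ly y 'X_[m] = y m.
Proof. by rewrite /Ly msuppX big_seq1 mcoeffX eqxx mul1r. Qed.

Lemma LyC y c : Ly y c%:MP = c * y 0%MM.
Proof. by rewrite -[c%:MP]mulr1 -mpolyX0 mul_mpolyC linearZ /= LyX. Qed.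

(* The functional [p |-> Ly y (p * q)] is again a Riesz functional, whose
   moment matrix is the localizing matrix of [q]. *)
Lemma Ly_mul y p q : Ly y (p * q) = Ly (fun m => Ly y ('X_[m] * q)) p.
Proof.
rewrite {1}[p]mpolyE big_distrl linear_sum /=; apply: eq_bigr => m _.
by rewrite -scalerAl linearZ.
Qed.

Lemma Ly_binomial_sqr y (p q : R) a b :
  Ly y ((p *: 'X_[a] + q *: 'X_[b]) ^+ 2) =
    p ^+ 2 * y (a + a)%MM + 2 * p * q * y (a + b)%MM + q ^+ 2 * y (b + b)%MM.
Proof. by rewrite binomial_sqrE !raddfD /= !linearZ /= !LyX. Qed.

End Riesz.

Section PrincipalMinors.
Variable R : realType.
Implicit Types (y F : 'X_{1..2} -> R).

Lemma psd_mx1 (A : 'M[R]_1) : 0 <= A 0 0 -> psd A.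
Proof. by move=> A_ge0 v; rewrite quadform_mx1 mulr_ge0 ?sqr_ge0. Qed.

Lemma psd_mx2 (A : 'M[R]_2) : A 0 1 = A 1 0 ->
  0 <= A 0 0 -> 0 <= A 1 1 -> A 0 1 ^+ 2 <= A 0 0 * A 1 1 -> psd A.
Proof.
move=> symA + + + v; rewrite quadform_mx2 -symA.
move: (A 0 0) (A 0 1) (A 1 1) (v 0 0) (v 1 0) => a b c x z a_ge0 c_ge0 det_ge0.
have [a0|a_neq0] := eqVneq a 0.
  have b0 : b = 0.
    by apply/eqP; rewrite -sqrf_eq0 eq_le sqr_ge0 andbT -(mul0r c) -a0.
  by rewrite a0 b0 !(mulr0, mul0r, add0r) mulr_ge0 ?sqr_ge0.
have a_gt0 : 0 < a by rewrite lt_def a_neq0.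
rewrite -(pmulr_rge0 _ a_gt0).
have -> : a * (x ^+ 2 * a + x * z * (b + b) + z ^+ 2 * c) =
  (a * x + b * z) ^+ 2 + (a * c - b ^+ 2) * z ^+ 2 by ring.
by rewrite addr_ge0 ?sqr_ge0 // mulr_ge0 ?sqr_ge0 // subr_ge0.
Qed.

Definition moment_psd2 (D : nat) y : Prop :=
  forall (k : nat) (s : 'I_k -> 'X_{1..2}), (k <= 2)%N -> injective s ->
    (forall i, (mdeg (s i) <= D)%N) -> psd (momsub y s).

Lemma moment_psd2_minors D F :
  (forall a, 0 <= F (a + a)%MM) ->
  (forall a b, F (a + b)%MM ^+ 2 <= F (a + a)%MM * F (b + b)%MM) ->
  moment_psd2 D F.
Proof.
move=> F_ge0 F_minor [|[|[|//]]] s _ _ _.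
- by move=> v; rewrite !mxE big_ord0.
- by apply: psd_mx1; rewrite mxE.
- by apply: psd_mx2; rewrite !mxE ?F_ge0 // addmC.
Qed.

Lemma moment_psd2_binomial_sqr D y (p q : R) a b :
  moment_psd2 D y -> (mdeg a <= D)%N -> (mdeg b <= D)%N ->
  0 <= Ly y ((p *: 'X_[a] + q *: 'X_[b]) ^+ 2).
Proof.
move=> My a_le b_le; rewrite Ly_binomial_sqr.
have [<-|a_neq_b] := eqVneq a b.
  have s_inj : injective (fun _ : 'I_1 => a) by move=> i j _; rewrite !ord1.
  have := My 1%N _ isT s_inj (fun=> a_le) (\col_i (p + q)).
  by rewrite quadform_mx1 !mxE; congr (0 <= _); ring.
pose s (i : 'I_2) := if i == ord0 then a else b.
have s_inj : injective s.
  move=> [[|[|//]] ?] [[|[|//]] ?]; rewrite /s /= => e; apply/val_inj => //=;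
  by rewrite e eqxx in a_neq_b.
have s_le i : (mdeg (s i) <= D)%N by rewrite /s; case: ifP.
have := My 2%N s isT s_inj s_le (\col_i (if i == ord0 then p else q)).
by rewrite quadform_mx2 !mxE /s /= [(b + a)%MM]addmC; congr (0 <= _); ring.
Qed.

Lemma Ly_SDSOS_ge0 D y sigma : moment_psd2 D y -> SDSOS D sigma -> 0 <= Ly y sigma.
Proof.
move=> My [n [p [q [a [b [deg_le ->]]]]]]; rewrite linear_sum /=.
by apply: sumr_ge0 => k _; have [] := deg_le k; exact: moment_psd2_binomial_sqr.
Qed.

End PrincipalMinors.

Section SDSOSCone.
Variable R : realType.

Lemma SDSOS_binomial_sqr d (p q : R) a b : (mdeg a <= d)%N -> (mdeg b <= d)%N ->
  SDSOS d ((p *: 'X_[a] + q *: 'X_[b]) ^+ 2).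
Proof.
by move=> a_le b_le; exists 1%N, (fun=> p), (fun=> q), (fun=> a), (fun=> b); rewrite big_ord1.
Qed.

Lemma SDSOSD d (s t : {mpoly R[2]}) : SDSOS d s -> SDSOS d t -> SDSOS d (s + t).
Proof.
move=> [m [p1 [q1 [a1 [b1 [le1 ->]]]]]] [n [p2 [q2 [a2 [b2 [le2 ->]]]]]].
pose join T (f1 : 'I_m -> T) (f2 : 'I_n -> T) k :=
  match split k with inl i => f1 i | inr j => f2 j end.
exists (m + n)%N, (join _ p1 p2), (join _ q1 q2), (join _ a1 a2), (join _ b1 b2).
split=> [k|]; first by rewrite /join; case: (split k).
by rewrite big_split_ord /join; congr (_ + _); apply: eq_bigr => i _;
  rewrite ?(unsplitK (inl _ : 'I_m + 'I_n)) ?(unsplitK (inr _ : 'I_m + 'I_n)).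
Qed.

End SDSOSCone.

Section Problem.
Variable R : realType.
Implicit Types (y : 'X_{1..2} -> R).

Lemma mpolyX_mono a b : 'X_[mono a b] = 'X_ord0 ^+ a * 'X_i1 ^+ b :> {mpoly R[2]}.
Proof. by rewrite monoE mpolyXD -!mpolyXn. Qed.

Lemma fpolyE : fpoly R = 4 *: 'X_[mono 0 0] - 4 *: 'X_[mono 1 0] - 4 *: 'X_[mono 0 1]
  + 'X_[mono 2 0] + 2 *: 'X_[mono 1 1] + 'X_[mono 0 2].
Proof. by rewrite !mpolyX_mono /fpoly -!mul_mpolyC; ring. Qed.

Lemma gpolyE : gpoly R = 1 - 'X_[mono 2 0] - 'X_[mono 0 2].
Proof. by rewrite !mpolyX_mono /gpoly; ring. Qed.

Lemma Ly_mulX_gpoly y m :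
  Ly y ('X_[m] * gpoly R) = y m - y (m + mono 2 0)%MM - y (m + mono 0 2)%MM.
Proof. by rewrite gpolyE !mulrBr mulr1 -!mpolyXD !raddfB /= !LyX. Qed.

Lemma moment_feasibleE d y : moment_feasible d y <->
  [/\ y 0%MM = 1, moment_psd2 d y & moment_psd2 d.-1 (fun m => Ly y ('X_[m] * gpoly R))].
Proof.
have locE k (s : 'I_k -> 'X_{1..2}) :
    locsub y s = momsub (fun m => Ly y ('X_[m] * gpoly R)) s.
  by apply/matrixP => i j; rewrite !mxE Ly_mulX_gpoly.
split=> [[y0 [My Mg]]|[y0 My Mg]]; split=> //; last split=> //.
- by move=> k s k_le s_inj s_le; rewrite -locE; exact: Mg.
- by move=> k s k_le s_inj s_le; rewrite locE; exact: Mg.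
Qed.

Lemma weak_duality d y lam :
  moment_feasible d y -> sdsos_feasible d lam -> lam <= Ly y (fpoly R).
Proof.
move=> /moment_feasibleE[y0 My Mg] [s0 [s1 [S0 [S1 cert]]]].
rewrite -subr_ge0 -[lam]mulr1 -y0 -LyC -raddfB /= cert raddfD /= Ly_mul.
by rewrite addr_ge0 // (Ly_SDSOS_ge0 My, Ly_SDSOS_ge0 Mg).
Qed.

Lemma sqrt2_sqr : Num.sqrt 2 ^+ 2 = 2 :> R.
Proof. by rewrite sqr_sqrtr ?ler0n. Qed.

Lemma half_sqrt2_sqr : (Num.sqrt 2 / 2) ^+ 2 = 2^-1 :> R.
Proof. by rewrite expr_div_n sqrt2_sqr; field. Qed.

(* The moments of the point x* = (sqrt 2 / 2, sqrt 2 / 2), with the sign of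
   x1^a1 x2^a2 flipped when a1 and a2 are both odd.  Each 2x2 minor is still
   that of a point evaluation and g vanishes at x*, so the relaxed constraints
   hold, but the flipped moment y_(1,1) = -1/2 puts L(f) 2 below f at x*. *)
Definition ystar (m : 'X_{1..2}) : R :=
  (-1) ^+ (m ord0 * m i1) * (Num.sqrt 2 / 2) ^+ mdeg m.

Lemma ystar_mono a b :
  ystar (mono a b) = (-1) ^+ (a * b) * (Num.sqrt 2 / 2) ^+ (a + b).
Proof. by rewrite /ystar mdeg_mono !mnmE. Qed.

Lemma ystar_double m : ystar (m + m)%MM = ((Num.sqrt 2 / 2) ^+ mdeg m) ^+ 2.
Proof.
rewrite /ystar !mnmDE -signr_odd oddM !oddD !addbb mul1r mdegD.
by rewrite -exprM mulnC mul2n addnn.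
Qed.

Lemma ystar_minor a b : ystar (a + b)%MM ^+ 2 = ystar (a + a)%MM * ystar (b + b)%MM.
Proof.
rewrite !ystar_double {1}/ystar exprMn sqrr_sign mul1r mdegD -!exprM -exprD.
by congr (_ ^+ _); lia.
Qed.

Lemma Ly_mulX_gpoly_ystar m : Ly ystar ('X_[m] * gpoly R) = 0.
Proof.
rewrite Ly_mulX_gpoly /ystar !mnmDE !mdegD !mdeg_mono !mnmE /= !addn0.
rewrite -!(@signr_odd R (_ * _)) !oddM !oddD /= !addbF !exprD half_sqrt2_sqr.
by field.
Qed.

Lemma ystar_moment_feasible d : moment_feasible d ystar.
Proof.
apply/moment_feasibleE; split.
- by rewrite /ystar mdeg0 !mnm0E mulr1.
- by apply: moment_psd2_minors => [a|a b]; rewrite (ystar_double, ystar_minor) ?sqr_ge0.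
- by apply: moment_psd2_minors => [a|a b]; rewrite !Ly_mulX_gpoly_ystar ?expr0n ?mulr0.
Qed.

Lemma Ly_ystar_fpoly : Ly ystar (fpoly R) = 4 * (1 - Num.sqrt 2).
Proof.
rewrite fpolyE !raddfD !raddfN /= !linearZ /= !LyX !ystar_mono.
rewrite !(mul0n, muln0, mul1n, addn0, add0n) -[(1 + 1)%N]/2%N !expr0 !expr1.
by rewrite half_sqrt2_sqr; field.
Qed.

Definition sdsos_sigma0 (r : R) : {mpoly R[2]} :=
    (r *: 'X_[mono 0 0] + (- r ^+ 3) *: 'X_[mono 1 0]) ^+ 2
  + (r *: 'X_[mono 0 0] + (- r ^+ 3) *: 'X_[mono 0 1]) ^+ 2
  + (1 *: 'X_[mono 1 0] + 1 *: 'X_[mono 0 1]) ^+ 2.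

Definition sdsos_sigma1 (r : R) : {mpoly R[2]} :=
  (r ^+ 3 *: 'X_[mono 0 0] + 0 *: 'X_[mono 0 0]) ^+ 2.

Lemma sdsos_certificate (r : R) : r ^+ 4 = 2 ->
  fpoly R - (4 * (1 - r ^+ 2))%:MP = sdsos_sigma0 r + sdsos_sigma1 r * gpoly R.
Proof.
move=> r4.
have cross : 2 * r * - r ^+ 3 = -4 by rewrite mulrN -mulrA -exprS r4; ring.
have r6 : (r ^+ 3) ^+ 2 = 2 * r ^+ 2 by rewrite -exprM -r4 -exprD.
rewrite /sdsos_sigma0 /sdsos_sigma1 !binomial_sqrE !monoD /= sqrrN r6 cross.
by rewrite fpolyE gpolyE !mpolyX_mono -!mul_mpolyC; ring.
Qed.

Lemma sdsos_feasible_opt d : (1 <= d)%N -> sdsos_feasible d (4 * (1 - Num.sqrt 2) : R).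
Proof.
move=> d_ge1; pose r := Num.sqrt (Num.sqrt 2 : R).
have r2 : r ^+ 2 = Num.sqrt 2 by rewrite sqr_sqrtr ?sqrtr_ge0.
have r4 : r ^+ 4 = 2 by rewrite -[4%N]/(2 * 2)%N exprM r2 sqrt2_sqr.
exists (sdsos_sigma0 r), (sdsos_sigma1 r); rewrite -r2 sdsos_certificate //.
split; [|split=> //].
- by rewrite /sdsos_sigma0; do ![apply: SDSOSD | apply: SDSOS_binomial_sqr];
    rewrite mdeg_mono.
- by apply: SDSOS_binomial_sqr; rewrite mdeg_mono.
Qed.

Lemma meval_fpoly (x : 'I_2 -> R) : (fpoly R).@[x] = (-2 + x ord0 + x i1) ^+ 2.
Proof. by rewrite /fpoly rmorphXn /= !mevalD mevalN mevalC !mevalXU. Qed.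

Lemma meval_gpoly (x : 'I_2 -> R) : (gpoly R).@[x] = 1 - x ord0 ^+ 2 - x i1 ^+ 2.
Proof. by rewrite /gpoly !mevalB meval1 !rmorphXn /= !mevalXU. Qed.

Lemma add_le_sqrt2 (a b : R) : a ^+ 2 + b ^+ 2 <= 1 -> a + b <= Num.sqrt 2.
Proof.
move=> disk; apply: le_trans (ler_norm (a + b)) _.
by rewrite -sqrtr_sqr ler_wsqrtr //; have := sqr_ge0 (a - b); nra.
Qed.

Lemma fpoly_min_on_disk (x : 'I_2 -> R) : 0 <= (gpoly R).@[x] ->
  2 * (3 - 2 * Num.sqrt 2) <= (fpoly R).@[x].
Proof.
rewrite meval_fpoly meval_gpoly => g_ge0.
have le_s : x ord0 + x i1 <= Num.sqrt 2 by apply: add_le_sqrt2; lra.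
have s2 := sqrt2_sqr; have s_ge0 : 0 <= Num.sqrt 2 :> R := sqrtr_ge0 _.
have s_le2 : Num.sqrt 2 <= 2 :> R by nra.
nra.
Qed.

Lemma fpoly_min_attained : exists x : 'I_2 -> R,
  0 <= (gpoly R).@[x] /\ (fpoly R).@[x] = 2 * (3 - 2 * Num.sqrt 2).
Proof.
exists (fun=> Num.sqrt 2 / 2); rewrite meval_fpoly meval_gpoly half_sqrt2_sqr; split; first lra.
have -> : -2 + Num.sqrt 2 / 2 + Num.sqrt 2 / 2 = Num.sqrt 2 - 2 :> R by field.
by rewrite sqrrB sqrt2_sqr; ring.
Qed.

End Problem.

Theorem mainTheorem2 (R : realType) :
  (* global minimum of f on {g >= 0} is 2(3 - 2 sqrt 2) *)
  ((exists x : 'I_2 -> R, 0 <= (gpoly R).@[x] /\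
       (fpoly R).@[x] = 2 * (3 - 2 * Num.sqrt 2)) /\
   (forall x : 'I_2 -> R, 0 <= (gpoly R).@[x] ->
       2 * (3 - 2 * Num.sqrt 2) <= (fpoly R).@[x])) /\
  (* for every d >= 1, both relaxations have optimal value 4(1 - sqrt 2) *)
  (forall d : nat, (1 <= d)%N ->
     is_sup (sdsos_feasible (R:=R) d) (4 * (1 - Num.sqrt 2)) /\
     is_inf (fun v : R => exists y : 'X_{1..2} -> R,
                moment_feasible d y /\ Ly y (fpoly R) = v)
            (4 * (1 - Num.sqrt 2))) /\
  (* strictly smaller than the global minimum, with gap 2 *)
  4 * (1 - Num.sqrt 2) < 2 * (3 - 2 * Num.sqrt 2 :> R) /\
  2 * (3 - 2 * Num.sqrt 2) - 4 * (1 - Num.sqrt 2) = 2 :> R.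
Proof.
split; [split|split; [|split]].
- exact: fpoly_min_attained.
- exact: fpoly_min_on_disk.
- move=> d d_ge1; split; split.
  + by move=> lam /(weak_duality (ystar_moment_feasible R d)); rewrite Ly_ystar_fpoly.
  + by move=> e e_gt0; exists (4 * (1 - Num.sqrt 2)); split; [exact: sdsos_feasible_opt | lra].
  + by move=> _ [y [y_feas <-]]; exact: weak_duality y_feas (sdsos_feasible_opt R d_ge1).
  + move=> e e_gt0; exists (4 * (1 - Num.sqrt 2)); split; last lra.
    by exists (@ystar R); split; [exact: ystar_moment_feasible | exact: Ly_ystar_fpoly].
- lra.
- ring.
Qed.
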